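(* Let $q$ be a prime power and $n$ a positive integer. Let $h\in\mathbb{F}_q[x]$, $f\in\mathbb{F}_{q^n}[x]$ and $P(x)=f(\mathrm{Tr}_{q^n/q}(x))+L_h(x)$. Then $P$ is a complete permutation polynomial of $\mathbb{F}_{q^n}$ if and only if: (i) $\gcd\left(h(x)\cdot(h(x)+1), \frac{x^n-1}{x-1}\right)=1$; and (ii) $Q(x):=T_n[f](x)+h(1)\cdot x\in\mathbb{F}_q[x]$ is a complete permutation polynomial of $\mathbb{F}_q$.
   Context: For $u(x)=\sum_{i=0}^m a_i x^i\in\mathbb{F}_q[x]$, its linearized $q$-associate is $L_u(x)=\sum_{i=0}^m a_i x^{q^i}$. $\mathrm{Tr}_{q^n/q}(x)=x+x^q+\cdots+x^{q^{n-1}}$. For $f(x)=\sum_{i=0}^d a_i x^i\in\mathbb{F}_{q^n}[x]$, $T_n[f](x)=\sum_{i=0}^d\mathrm{Tr}_{q^n/q}(a_i)x^i\in\mathbb{F}_q[x]$. A polynomial $b$ over a finite field $K$ is a complete permutation polynomial of $K$ if both $b(x)$ and $b(x)+x$ induce bijections of $K$. *)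

From mathcomp Require Import all_boot all_algebra.
Set Implicit Arguments. Unset Strict Implicit. Unset Printing Implicit Defensive.
Import GRing.Theory.
Local Open Scope ring_scope.

Definition is_prime_power (q : nat) : Prop :=
  exists p k : nat, prime p /\ q = (p ^ k.+1)%N.

(* The subfield F_q of K, as the fixed points of x |-> x^q. When #|K| = q^n,
   this is exactly the unique subfield of K with q elements. *)
Definition subF (K : finFieldType) (q : nat) : {pred K} := [pred x | x ^+ q == x].

Definition tr (K : finFieldType) (n q : nat) (x : K) : K :=
  \sum_(i < n) x ^+ (q ^ i).

Definition linq (K : finFieldType) (q : nat) (u : {poly K}) (x : K) : K :=
  \sum_(i < size u) u`_i * x ^+ (q ^ i).

Definition Tn (K : finFieldType) (n q : nat) (f : {poly K}) : {poly K} :=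
  \poly_(i < size f) tr n q f`_i.

Definition bij_on (T : Type) (S : T -> Prop) (g : T -> T) : Prop :=
  (forall x, S x -> S (g x)) /\
  (forall x y, S x -> S y -> g x = g y -> x = y) /\
  (forall y, S y -> exists x, S x /\ g x = y).

Definition cpp_on (K : finFieldType) (S : K -> Prop) (g : K -> K) : Prop :=
  bij_on S g /\ bij_on S (fun x => g x + x).

From HB Require Import structures.
From mathcomp Require Import all_boot all_algebra all_field.
From mathcomp Require Import zify.
Set Implicit Arguments.
Unset Strict Implicit.
Unset Printing Implicit Defensive.

Import GRing.Theory.
Local Open Scope ring_scope.

(** u |-> L_u makes K a module over F_q[x] in which x^n - 1 acts as 0, and
   Tr_{q^n/q} = L_Phi with Phi = (x^n - 1)/(x - 1).  Since Tr (P x) = Q (Tr x)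
   and P (x + y) = P x + L_h y whenever Tr y = 0, P permutes K iff Q permutes
   F_q and L_h has no nonzero root in ker Tr.  The latter means gcd(h, Phi) = 1:
   a common factor g produces the nonzero common root L_{(x^n-1)/g}(z), since
   a nonzero L_r with deg r < n has at most q^(deg r) < #|K| roots.  The same
   argument for P + id, where h becomes h + 1, gives the theorem. *)

Section FiniteBijections.
Variable T : finType.
Implicit Types (g : T -> T) (S : {pred T}).

Lemma bij_onT g : bij_on (fun _ => True) g <-> injective g.
Proof.
split=> [[_ [g_inj _]] x y | g_inj]; first exact: g_inj.
have [g' gK g'K] := injF_bij g_inj.
by split=> //; split=> [x y _ _ | y _]; [apply: g_inj | exists (g' y)].
Qed.

Lemma bij_on_onto S g : {in S, forall x, g x \in S} ->
  (forall y, y \in S -> exists2 x, x \in S & g x = y) -> bij_on (fun x => x \in S) g.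
Proof.
move=> gS g_onto.
have gSE : [set g x | x in S] = [set x in S].
  apply/setP=> y; rewrite inE; apply/imsetP/idP => [[x xS ->] | yS]; first exact: gS.
  by have [x xS <-] := g_onto y yS; exists x.
have g_inj : {in S &, injective g} by apply/imset_injP; rewrite gSE cardsE.
split; first exact: gS.
by split=> [x y xS yS | y /g_onto[x xS gx]]; [apply: g_inj | exists x].
Qed.

End FiniteBijections.

Section AdditiveFibration.
Variables (G : finZmodType) (psi : {additive G -> G}) (S : {pred G}).
Hypotheses (psiS : forall x, psi x \in S)
  (psi_onto : forall t, t \in S -> exists x, psi x = t).
Variables (P Q L : G -> G).
Hypotheses (psiP : forall x, psi (P x) = Q (psi x))
  (P_fibre : forall x y, psi y = 0 -> P (x + y) = P x + L y).

Lemma bij_on_fibration :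
  bij_on (fun _ => True) P <->
  bij_on (fun t => t \in S) Q /\ (forall y, psi y = 0 -> L y = 0 -> y = 0).
Proof.
rewrite bij_onT; split=> [P_inj | [[_ [Q_inj _]] L_ker] x1 x2 eqP12].
  split=> [|y psi_y Ly]; last by apply: P_inj; rewrite -[y]add0r P_fibre // Ly addr0.
  have [P' PK P'K] := injF_bij P_inj.
  apply: bij_on_onto => [_ /psi_onto[x <-] | _ /psi_onto[z <-]]; first by rewrite -psiP.
  by exists (psi (P' z)); rewrite // -psiP P'K.
have psi_eq : psi x1 = psi x2 by apply: Q_inj; rewrite ?psiS // -!psiP eqP12.
have psi_diff : psi (x2 - x1) = 0 by rewrite raddfB psi_eq subrr.
apply/eqP; rewrite eq_sym -subr_eq0; apply/eqP/L_ker => //.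
by apply: (addrI (P x1)); rewrite -P_fibre // subrKC eqP12 addr0.
Qed.

End AdditiveFibration.

Section Linearized.
Variables (K : finFieldType) (q : nat).
Hypothesis q_pchar : [pchar K].-nat q.
Implicit Types (x y z t c : K) (u v a b r : {poly K}).

Lemma q_gt0 : (0 < q)%N.
Proof. by case/andP: q_pchar. Qed.

Lemma exprDq i x y : (x + y) ^+ (q ^ i) = x ^+ (q ^ i) + y ^+ (q ^ i).
Proof. by apply: exprDn_pchar; rewrite pnatX q_pchar. Qed.

Lemma exprq_fixed c i : c ^+ q = c -> c ^+ (q ^ i) = c.
Proof. by move=> cq; elim: i => [|i IHi]; rewrite ?expr1 // expnSr exprM IHi cq. Qed.

Definition frob x := x ^+ q.

Lemma frob_is_nmod_morphism : nmod_morphism frob.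
Proof.
rewrite /frob; split=> [|x y]; first by rewrite expr0n eqn0Ngt q_gt0.
by have := exprDq 1 x y; rewrite expn1.
Qed.

Lemma frob_is_monoid_morphism : monoid_morphism frob.
Proof. by split=> [|x y]; rewrite /frob ?expr1n // exprMn. Qed.

HB.instance Definition _ := GRing.isNmodMorphism.Build K K frob frob_is_nmod_morphism.
HB.instance Definition _ :=
  GRing.isMonoidMorphism.Build K K frob frob_is_monoid_morphism.

Lemma coef_frob_fixed u i : map_poly frob u = u -> u`_i ^+ q = u`_i.
Proof. by move/(congr1 (coefp i)); rewrite /= coef_map. Qed.

Lemma polyOver_subF_frob u : u \is a polyOver (@subF K q) -> map_poly frob u = u.
Proof.
move/(all_nthP 0) => uF; apply/polyP=> i; rewrite coef_map.
have [lt_i_u | le_u_i] := ltnP i (size u); first exact/eqP/uF.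
by rewrite nth_default // raddf0.
Qed.

Lemma linq_widen u N x : (size u <= N)%N ->
  linq q u x = \sum_(i < N) u`_i * x ^+ (q ^ i).
Proof.
move=> le_u_N; rewrite /linq (big_ord_widen N (fun i => u`_i * x ^+ (q ^ i)) le_u_N).
rewrite big_mkcond; apply: eq_bigr => i _; case: ltnP => // le_u_i.
by rewrite nth_default ?mul0r.
Qed.

Lemma linq0 x : linq q 0 x = 0.
Proof. by rewrite /linq size_poly0 big_ord0. Qed.

Lemma linqD a b x : linq q (a + b) x = linq q a x + linq q b x.
Proof.
pose N := maxn (size a) (size b).
have le_ab_N : (size (a + b)%R <= N)%N by apply: leq_trans (size_polyD _ _) _.
rewrite !(@linq_widen _ N) ?leq_maxl ?leq_maxr // -big_split.
by apply: eq_bigr => i _; rewrite coefD mulrDl.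
Qed.

Lemma linq_sum (I : Type) (r : seq I) (F : I -> {poly K}) x :
  linq q (\sum_(i <- r) F i) x = \sum_(i <- r) linq q (F i) x.
Proof. exact: (big_morph (linq q ^~ x) (fun a b => linqD a b x) (linq0 x)). Qed.

Lemma linqZ c u x : linq q (c *: u) x = c * linq q u x.
Proof.
rewrite (@linq_widen _ (size u)) ?size_scale_leq // /linq mulr_sumr.
by apply: eq_bigr => i _; rewrite coefZ mulrA.
Qed.

Lemma linqB a b x : linq q (a - b) x = linq q a x - linq q b x.
Proof. by rewrite linqD -scaleN1r linqZ mulN1r. Qed.

Lemma linq1 x : linq q 1 x = x.
Proof. by rewrite /linq size_poly1 big_ord1 coefC mul1r expr1. Qed.

Lemma linqC c x : linq q c%:P x = c * x.
Proof. by rewrite -[c%:P]mulr1 mul_polyC linqZ linq1. Qed.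

Lemma linqMX u x : linq q (u * 'X) x = linq q u (x ^+ q).
Proof.
have [-> | u0] := eqVneq u 0; first by rewrite mul0r !linq0.
rewrite /linq size_mulX // big_ord_recl coefMX eqxx mul0r add0r.
by apply: eq_bigr => i _; rewrite coefMX lift0 /= expnS exprM.
Qed.

Lemma linqXn m x : linq q 'X^m x = x ^+ (q ^ m).
Proof.
elim: m x => [|m IHm] x; first by rewrite expr0 linq1 expr1.
by rewrite exprSr linqMX IHm -exprM -expnS.
Qed.

Lemma linq_is_zmod_morphism u : zmod_morphism (linq q u).
Proof.
move=> x y; rewrite /linq -sumrB; apply: eq_bigr => i _.
by rewrite -mulrBr -[in RHS](subrK y x) [in RHS]exprDq addrK.
Qed.

HB.instance Definition _ u :=
  GRing.isZmodMorphism.Build K K (linq q u) (linq_is_zmod_morphism u).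

Lemma frob_linq u x : map_poly frob u = u -> linq q u x ^+ q = linq q u (x ^+ q).
Proof.
move=> uF; rewrite -[_ ^+ q]/(frob _) rmorph_sum; apply: eq_bigr => i _.
rewrite rmorphM; congr (_ * _); first exact: coef_frob_fixed.
by rewrite /= /frob -!exprM mulnC.
Qed.

Lemma linq_comp a b x : map_poly frob b = b ->
  linq q a (linq q b x) = linq q (a * b) x.
Proof.
move=> bF; elim/poly_ind: a x => [|a c IHa] x; first by rewrite mul0r !linq0.
by rewrite mulrDl mulrAC mul_polyC !linqD !linqMX linqZ -IHa frob_linq // linqC.
Qed.

Lemma linq_fixed u t : t ^+ q = t -> linq q u t = u.[1] * t.
Proof.
move=> tq; rewrite horner_coef mulr_suml; apply: eq_bigr => i _.
by rewrite exprq_fixed // expr1n mulr1.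
Qed.

Section FiniteField.
Variable n : nat.
Hypotheses (n_gt0 : (0 < n)%N) (cardK : #|K| = (q ^ n)%N).

Lemma q_gt1 : (1 < q)%N.
Proof. by rewrite -(ltn_exp2r 1 q n_gt0) exp1n -cardK finNzRing_gt1. Qed.

Lemma expr_card x : x ^+ (q ^ n) = x.
Proof. by rewrite -cardK expf_card. Qed.

Lemma size_Xn_sub1 : size ('X^n - 1 : {poly K}) = n.+1.
Proof. by rewrite -polyC1 size_XnsubC. Qed.

Lemma map_frob_Xn_sub1 : map_poly frob ('X^n - 1) = 'X^n - 1.
Proof. by rewrite rmorphB /= map_polyXn rmorph1. Qed.

Lemma linq_mul_Xn_sub1 u x : linq q (u * ('X^n - 1)) x = 0.
Proof.
by rewrite -linq_comp ?map_frob_Xn_sub1 // linqB linqXn linq1 expr_card subrr raddf0.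
Qed.

Lemma card_linq_roots r : r != 0 ->
  (#|[pred z | linq q r z == 0%R]| <= q ^ (size r).-1)%N.
Proof.
move=> r0; set m := (size r).-1.
pose R := \sum_(i < size r) r`_i *: 'X^(q ^ i).
have R_linq z : R.[z] = linq q r z.
  by rewrite horner_sum; apply: eq_bigr => i _; rewrite hornerZ hornerXn.
have lt_m_r : (m < size r)%N by rewrite prednK // size_poly_gt0.
have R_size : (size R <= (q ^ m).+1)%N.
  apply: leq_trans (size_sum _ _ _) _; apply/bigmax_leqP => i _.
  apply: leq_trans (size_scale_leq _ _) _.
  by rewrite size_polyXn ltnS leq_exp2l ?q_gt1 // -ltnS prednK ?size_poly_gt0.
have R_lead : R`_(q ^ m) = lead_coef r.
  rewrite coef_sum (bigD1 (Ordinal lt_m_r)) //= coefZ coefXn eqxx mulr1.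
  rewrite big1 ?addr0 // => i ne_i_m.
  have /negbTE ne_i_m' : (i != m :> nat) := ne_i_m.
  by rewrite coefZ coefXn eqn_exp2l ?q_gt1 // eq_sym ne_i_m' mulr0.
have R0 : R != 0.
  by apply: contraNneq r0 => R0; rewrite -lead_coef_eq0 -R_lead R0 coef0.
have roots_R : all (root R) (enum [pred z | linq q r z == 0]).
  by apply/allP => z; rewrite mem_enum inE /= rootE R_linq.
by rewrite cardE -ltnS (leq_trans (max_poly_roots R0 roots_R (enum_uniq _))).
Qed.

Lemma linq_neq0 r : r != 0 -> (size r <= n)%N -> exists x, linq q r x != 0.
Proof.
move=> r0 le_r_n.
have [x rx | all_roots] := pickP [pred x | linq q r x != 0]; first by exists x.
have : (#|K| <= q ^ (size r).-1)%N.
  apply: leq_trans (card_linq_roots r0); apply/subset_leq_card/subsetP => z _.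
  by rewrite inE /= (negbFE (all_roots z)).
rewrite cardK leq_exp2l ?q_gt1 //; have := size_poly_gt0 r; rewrite r0.
by move: le_r_n; clear; lia.
Qed.

Lemma coprimep_linq_ker u v : map_poly frob u = u -> map_poly frob v = v ->
  v %| 'X^n - 1 ->
  coprimep u v <-> (forall y, linq q v y = 0 -> linq q u y = 0 -> y = 0).
Proof.
move=> uF vF v_dvd; split.
  move=> /Bezout_coprimepP[[a b] /= /eqp_size]; rewrite size_poly1.
  move=> /eqP/size_poly1P[c c0 Eab] y vy uy.
  have : c * y = 0 by rewrite -linqC -Eab linqD -!linq_comp // uy vy !raddf0 addr0.
  by move/eqP; rewrite mulf_eq0 (negPf c0) => /eqP.
move=> ker_uv; apply/negPn/negP => not_coprime.
have Xn1_0 : 'X^n - 1 != 0 :> {poly K} by rewrite -size_poly_eq0 size_Xn_sub1.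
have v0 : v != 0 by apply: contraNneq Xn1_0 => v0; rewrite -dvd0p -v0.
set g := gcdp u v.
have g_gt1 : (1 < size g)%N.
  move: not_coprime; rewrite /coprimep -/g ltn_neqAle eq_sym => ->.
  by rewrite size_poly_gt0 gcdp_eq0 negb_and v0 orbT.
have gF : map_poly frob g = g by rewrite gcdp_map uF vF.
set r := ('X^n - 1) %/ g.
have rg : r * g = 'X^n - 1 by rewrite divpK // (dvdp_trans (dvdp_gcdr u v)).
have rF : map_poly frob r = r by rewrite map_divp map_frob_Xn_sub1 gF.
have r0 : r != 0 by apply: contraNneq Xn1_0 => r0; rewrite -rg r0 mul0r.
have le_r_n : (size r <= n)%N.
  have := size_Xn_sub1; rewrite -rg size_mul //; last first.
    by rewrite -size_poly_gt0 ltnW.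
  by move: (size r) (size g) g_gt1 => a b; lia.
have [z /eqP] := linq_neq0 r0 le_r_n; apply.
have g_dvd_kills w : g %| w -> linq q w (linq q r z) = 0.
  by move=> g_dvd; rewrite linq_comp // -(divpK g_dvd) -mulrA (mulrC g) rg linq_mul_Xn_sub1.
by apply: ker_uv; apply: g_dvd_kills; rewrite ?dvdp_gcdl ?dvdp_gcdr.
Qed.

Definition trpoly : {poly K} := \sum_(i < n) 'X^i.

Lemma trE x : tr n q x = linq q trpoly x.
Proof. by rewrite linq_sum; apply: eq_bigr => i _; rewrite linqXn. Qed.

Lemma trpoly_mulX_sub1 : trpoly * ('X - 1) = 'X^n - 1.
Proof. by rewrite mulrC -subrX1. Qed.

Lemma divp_Xn_sub1 : ('X^n - 1) %/ ('X - 1) = trpoly.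
Proof. by rewrite -trpoly_mulX_sub1 mulpK // -size_poly_eq0 -polyC1 size_XsubC. Qed.

Lemma size_trpoly : size trpoly = n.
Proof.
have := size_Xn_sub1; rewrite -trpoly_mulX_sub1.
have [-> | t0] := eqVneq trpoly 0; first by rewrite mul0r size_poly0.
by rewrite size_mul ?polyXsubC_eq0 // -polyC1 size_XsubC addn2 => -[].
Qed.

Lemma map_frob_trpoly : map_poly frob trpoly = trpoly.
Proof. by rewrite rmorph_sum; apply: eq_bigr => i _; rewrite /= map_polyXn. Qed.

Lemma tr_frob x : tr n q (x ^+ q) = tr n q x.
Proof.
rewrite !trE -linqMX -[X in _ * X](subrK 1 'X) mulrDr mulr1.
by rewrite trpoly_mulX_sub1 linqD -[_ - 1]mul1r linq_mul_Xn_sub1 add0r.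
Qed.

Lemma tr_fixed x : tr n q x ^+ q = tr n q x.
Proof. by rewrite [in LHS]trE frob_linq ?map_frob_trpoly // -trE tr_frob. Qed.

Lemma tr_is_zmod_morphism : zmod_morphism (tr n q : K -> K).
Proof. by move=> x y; rewrite !trE raddfB. Qed.

HB.instance Definition _ :=
  GRing.isZmodMorphism.Build K K (tr n q) tr_is_zmod_morphism.

Lemma trZ c x : c ^+ q = c -> tr n q (c * x) = c * tr n q x.
Proof.
by move=> cq; rewrite /tr mulr_sumr; apply: eq_bigr => i _; rewrite exprMn (exprq_fixed _ cq).
Qed.

Lemma tr_onto t : t ^+ q = t -> exists x, tr n q x = t.
Proof.
move=> tq; have trpoly0 : trpoly != 0 by rewrite -size_poly_eq0 size_trpoly -lt0n.
have [x0] := linq_neq0 trpoly0 (eq_leq size_trpoly); rewrite -trE => trx0.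
exists (t / tr n q x0 * x0).
by rewrite trZ ?divfK // exprMn exprVn tq tr_fixed.
Qed.

Lemma tr_linq u x : map_poly frob u = u ->
  tr n q (linq q u x) = u.[1] * tr n q x.
Proof.
move=> uF; rewrite trE linq_comp // mulrC -linq_comp ?map_frob_trpoly //.
by rewrite -trE linq_fixed // tr_fixed.
Qed.

Lemma tr_horner f t : t ^+ q = t -> tr n q f.[t] = (Tn n q f).[t].
Proof.
move=> tq; rewrite horner_coef /Tn horner_poly raddf_sum; apply: eq_bigr => i _ /=.
by rewrite mulrC trZ 1?mulrC // exprAC tq.
Qed.

Lemma bij_on_tr_fibration (P R : K -> K) u : map_poly frob u = u ->
  (forall x, tr n q (P x) = R (tr n q x)) ->
  (forall x y, tr n q y = 0 -> P (x + y) = P x + linq q u y) ->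
  bij_on (fun _ => True) P <->
  bij_on (fun t => t \in @subF K q) R /\ coprimep u trpoly.
Proof.
move=> uF trP P_fibre.
have trF x : tr n q x \in @subF K q by apply/eqP; apply: tr_fixed.
have tr_ontoF t : t \in @subF K q -> exists x, tr n q x = t by move/eqP; apply: tr_onto.
rewrite (bij_on_fibration trF tr_ontoF trP P_fibre).
rewrite (coprimep_linq_ker uF map_frob_trpoly); last by rewrite -trpoly_mulX_sub1 dvdp_mulr.
by split=> -[R_bij ker_u]; split=> // y /=; [rewrite -trE | rewrite trE]; apply: ker_u.
Qed.

Theorem cpp_tr_linq h f : map_poly frob h = h ->
  cpp_on (fun _ => True) (fun x => f.[tr n q x] + linq q h x) <->
  coprimep (h * (h + 1)) trpoly /\
  cpp_on (fun t => t \in @subF K q) (fun t => (Tn n q f + h.[1] *: 'X).[t]).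
Proof.
move=> hF; set Qf := Tn n q f + h.[1] *: 'X.
have hF1 : map_poly frob (h + 1) = h + 1 by rewrite rmorphD rmorph1 /= hF.
have trP x : tr n q (f.[tr n q x] + linq q h x) = Qf.[tr n q x].
  by rewrite raddfD /= tr_horner ?tr_fixed // tr_linq // hornerD hornerZ hornerX.
have P_fibre x y : tr n q y = 0 ->
    f.[tr n q (x + y)] + linq q h (x + y) = f.[tr n q x] + linq q h x + linq q h y.
  by move=> try0; rewrite !raddfD /= try0 addr0 addrA.
rewrite /cpp_on coprimepMl (bij_on_tr_fibration hF trP P_fibre).
rewrite (@bij_on_tr_fibration _ (fun t => Qf.[t] + t) _ hF1); last 2 first.
- by move=> x; rewrite raddfD /= trP.
- by move=> x y /P_fibre->; rewrite linqD linq1 addrACA.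
by split=> [[[Q_bij ->] [Q1_bij ->]] | [/andP[-> ->] [Q_bij Q1_bij]]].
Qed.

End FiniteField.

End Linearized.

Lemma prime_power_pchar (K : finFieldType) q n :
  is_prime_power q -> #|K| = (q ^ n)%N -> [pchar K].-nat q.
Proof.
move=> [p [k [p_prime ->]]] cardK.
have pK : p \in [pchar K] by apply: (card_finPcharP _ p_prime); rewrite cardK -expnM.
by rewrite pnatX pnatE ?pK.
Qed.

Theorem corollary3p4 (K : finFieldType) (q n : nat)
  (hq : is_prime_power q) (hn : (0 < n)%N) (hK : #|K| = (q ^ n)%N)
  (h f : {poly K}) (hh : h \is a polyOver ((@subF K q))) :
  cpp_on (fun _ => True) (fun x => f.[tr n q x] + linq q h x) <->
  (coprimep (h * (h + 1)) (('X^n - 1) %/ ('X - 1)) /\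
   cpp_on (fun x => x \in (@subF K q)) (fun x => (Tn n q f + h.[1] *: 'X).[x])).
Proof.
have q_pchar := prime_power_pchar hq hK.
rewrite divp_Xn_sub1.
exact: (cpp_tr_linq q_pchar hn hK f (polyOver_subF_frob q_pchar hh)).
Qed.
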